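(* Let $\rho\in\mathcal{D}$ be non-singular with $f$ differentiable at $\rho$. If $\rho$ is a minimizer of $f$ on $\mathcal{D}$, then $\rho(\alpha)=\rho$ for all $\alpha\ge0$. If $\rho(\alpha)=\rho$ for some $\alpha>0$, then $\rho$ is a minimizer of $f$ on $\mathcal{D}$.
   Context: $\mathcal{D}=\{\rho\in\mathbb{C}^{d\times d}:\rho\succeq0,\ \operatorname{tr}\rho=1\}$; $f$ is a convex function on $d\times d$ Hermitian matrices; $\nabla f(\rho)$ is its Hermitian gradient w.r.t. $\langle A,B\rangle=\operatorname{tr}(A^{\mathrm H}B)$. $\rho(\alpha):=\exp[\log\rho-\alpha\nabla f(\rho)]/\operatorname{tr}\exp[\log\rho-\alpha\nabla f(\rho)]$ (matrix exponential/logarithm). *)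

From HB Require Import structures.
From mathcomp Require Import all_boot all_order all_algebra.
From mathcomp Require Import complex.
From mathcomp Require Import reals.
From mathcomp.analysis Require Import sequences exp.

Set Implicit Arguments.
Unset Strict Implicit.
Unset Printing Implicit Defensive.

Import Order.TTheory GRing.Theory Num.Theory Num.Def.
Local Open Scope ring_scope.

Definition adjmx (R : realType) (m n : nat) (A : 'M[R[i]]_(m, n)) : 'M[R[i]]_(n, m) :=
  map_mx conjC A^T.

(* Hermitian matrices: A^H = A (library notion hermsymmx : A^T = conj A). *)
Definition hermmx (R : realType) (d : nat) (A : 'M[R[i]]_d) : Prop :=
  A \is hermsymmx.

Definition psdmx (R : realType) (d : nat) (A : 'M[R[i]]_d) : Prop :=
  forall v : 'rV[R[i]]_d, 0 <= (v *m A *m adjmx v) 0 0.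

Definition density (R : realType) (d : nat) (rho : 'M[R[i]]_d) : Prop :=
  hermmx rho /\ psdmx rho /\ \tr rho = 1.

Definition hsdot (R : realType) (d : nat) (A B : 'M[R[i]]_d) : R[i] :=
  \tr (adjmx A *m B).

Definition frob (R : realType) (d : nat) (A : 'M[R[i]]_d) : R :=
  Num.sqrt (complex.Re (hsdot A A)).

(* Matrix function of a Hermitian matrix through its spectral decomposition
   A = P^-1 diag(lambda) P (P unitary, lambda real):
   g(A) := P^-1 diag(g(lambda)) P. *)
Definition mxfun (R : realType) (d : nat) (g : R -> R) (A : 'M[R[i]]_d) : 'M[R[i]]_d :=
  invmx (spectralmx A) *m
  diag_mx (map_mx (fun z : R[i] => (g (complex.Re z))%:C%C) (spectral_diag A)) *m
  spectralmx A.

Definition expmx (R : realType) (d : nat) (A : 'M[R[i]]_d) := mxfun (@expR R) A.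
Definition logmx (R : realType) (d : nat) (A : 'M[R[i]]_d) := mxfun (@ln R) A.

Definition convex_herm (R : realType) (d : nat) (f : 'M[R[i]]_d -> R) : Prop :=
  forall (A B : 'M[R[i]]_d) (t : R), hermmx A -> hermmx B -> 0 <= t -> t <= 1 ->
    f ((t%:C)%C *: A + ((1 - t)%:C)%C *: B) <= t * f A + (1 - t) * f B.

(* f is (Frechet) differentiable at rho, on the real space of Hermitian
   matrices, with Hermitian gradient G w.r.t. <A,B> = tr(A^H B):
   f(rho + H) = f(rho) + <G,H> + o(||H||) for Hermitian H. *)
Definition is_gradient (R : realType) (d : nat) (f : 'M[R[i]]_d -> R)
    (rho G : 'M[R[i]]_d) : Prop :=
  hermmx G /\
  forall eps : R, 0 < eps -> exists2 delta : R, 0 < delta &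
    forall H : 'M[R[i]]_d, hermmx H -> frob H < delta ->
      `| f (rho + H) - f rho - complex.Re (hsdot G H) | <= eps * frob H.

Definition rho_step (R : realType) (d : nat) (rho G : 'M[R[i]]_d) (alpha : R)
    : 'M[R[i]]_d :=
  let E := expmx (logmx rho - (alpha%:C)%C *: G) in (\tr E)^-1 *: E.

Definition minimizer (R : realType) (d : nat) (f : 'M[R[i]]_d -> R)
    (rho : 'M[R[i]]_d) : Prop :=
  density rho /\ forall sigma : 'M[R[i]]_d, density sigma -> f rho <= f sigma.

From HB Require Import structures.
From mathcomp Require Import all_boot all_order all_algebra.
From mathcomp Require Import complex.
From mathcomp Require Import reals.
From mathcomp.analysis Require Import sequences exp.
From mathcomp Require Import ring lra.

(* Both implications go through the fact that the gradient G is a real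
   multiple of the identity.
   If rho minimizes f, the first-order condition Re <G, sigma - rho> >= 0,
   tested on the pure states sigma = w^H w / |w|^2, says that G - m I is
   positive semidefinite for m = Re tr (G rho); since tr ((G - m I) rho) = 0
   and rho is positive definite, G = m I.  Then
   exp (log rho - alpha m I) = e^(-alpha m) rho normalizes back to rho.
   Conversely, if rho(alpha) = rho then exp (log rho - alpha G) = t rho with
   t > 0 its trace, and taking logarithms gives alpha G = - (ln t) I.  A scalar
   gradient is orthogonal to sigma - rho for every density sigma, so convexity
   gives f sigma >= f rho. *)

Set Implicit Arguments.
Unset Strict Implicit.
Unset Printing Implicit Defensive.

Import Order.TTheory GRing.Theory Num.Theory Num.Def.
Local Open Scope complex_scope.
Local Open Scope ring_scope.

Section Adjoint.
Variable R : realType.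
Local Notation C := R[i].

Lemma conjCc (s : R) : conjC (s%:C : C) = s%:C.
Proof. exact: conjc_real. Qed.

Lemma realc_neq0 (s : R) : s != 0 -> s%:C != 0 :> C.
Proof. by rewrite fmorph_eq0. Qed.

Lemma Re_realcM (s : R) (z : C) : complex.Re (s%:C * z) = s * complex.Re z.
Proof. by case: z => a b /=; rewrite mul0r subr0. Qed.

Lemma ReD (x y : C) : complex.Re (x + y) = complex.Re x + complex.Re y.
Proof. by case: x; case: y. Qed.

Lemma ReB (x y : C) : complex.Re (x - y) = complex.Re x - complex.Re y.
Proof. by case: x; case: y. Qed.

Lemma Re_sum n (F : 'I_n -> C) : complex.Re (\sum_k F k) = \sum_k complex.Re (F k).
Proof. exact: (big_morph _ ReD). Qed.

Lemma adjmxE m n (A : 'M[C]_(m, n)) i j : adjmx A i j = conjC (A j i).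
Proof. by rewrite !mxE. Qed.

Lemma adjmxK m n (A : 'M[C]_(m, n)) : adjmx (adjmx A) = A.
Proof. exact: trmxCK. Qed.

Lemma adjmxM m n p (A : 'M[C]_(m, n)) (B : 'M[C]_(n, p)) :
  adjmx (A *m B) = adjmx B *m adjmx A.
Proof. by rewrite /adjmx trmx_mul map_mxM. Qed.

Lemma adjmxD m n (A B : 'M[C]_(m, n)) : adjmx (A + B) = adjmx A + adjmx B.
Proof. by apply/matrixP => i j; rewrite !mxE rmorphD. Qed.

Lemma adjmxN m n (A : 'M[C]_(m, n)) : adjmx (- A) = - adjmx A.
Proof. by apply/matrixP => i j; rewrite !mxE rmorphN. Qed.

Lemma adjmxZ m n a (A : 'M[C]_(m, n)) : adjmx (a *: A) = conjC a *: adjmx A.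
Proof. by apply/matrixP => i j; rewrite !mxE rmorphM. Qed.

Lemma adjmx_scalar n (a : C) : adjmx (a%:M : 'M_n) = (conjC a)%:M.
Proof. by apply/matrixP => i j; rewrite !mxE eq_sym rmorphMn. Qed.

Lemma adjmx_delta n (j : 'I_n) :
  adjmx (delta_mx 0 j : 'rV[C]_n) = delta_mx j (0 : 'I_1).
Proof. by rewrite /adjmx trmx_delta map_delta_mx. Qed.

Lemma invmx_unitaryE n (P : 'M[C]_n) : P \is unitarymx -> invmx P = adjmx P.
Proof. exact: invmx_unitary. Qed.

Lemma hermmxP n (A : 'M[C]_n) : hermmx A <-> adjmx A = A.
Proof.
rewrite /hermmx; split => [/is_hermitianmxP | eA].
  by rewrite expr0 scale1r => eA.
by apply/is_hermitianmxP; rewrite expr0 scale1r; exact: esym.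
Qed.

Lemma hermmxD n (A B : 'M[C]_n) : hermmx A -> hermmx B -> hermmx (A + B).
Proof. by move=> /hermmxP eA /hermmxP eB; apply/hermmxP; rewrite adjmxD eA eB. Qed.

Lemma hermmxN n (A : 'M[C]_n) : hermmx A -> hermmx (- A).
Proof. by move=> /hermmxP eA; apply/hermmxP; rewrite adjmxN eA. Qed.

Lemma hermmxZ n (s : R) (A : 'M[C]_n) : hermmx A -> hermmx (s%:C *: A).
Proof. by move=> /hermmxP eA; apply/hermmxP; rewrite adjmxZ conjCc eA. Qed.

Lemma hermmx_scalar n (s : R) : hermmx (s%:C%:M : 'M[C]_n).
Proof. by apply/hermmxP; rewrite adjmx_scalar conjCc. Qed.

End Adjoint.

Section MatrixFunction.
Variable R : realType.
Local Notation C := R[i].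

Definition diagR n (lam : 'I_n -> R) : 'M[C]_n := diag_mx (\row_j (lam j)%:C).

Lemma eq_diagR n (lam mu : 'I_n -> R) : lam =1 mu -> diagR lam = diagR mu.
Proof. by move=> e; apply/matrixP => i j; rewrite !mxE e. Qed.

Lemma adjmx_diagR n (lam : 'I_n -> R) : adjmx (diagR lam) = diagR lam.
Proof.
apply/matrixP => i j; rewrite !mxE eq_sym.
by have [->|_] := eqVneq i j; rewrite ?mulr1n ?conjCc // !mulr0n conjC0.
Qed.

Lemma diagR_addc n (lam : 'I_n -> R) (c : R) :
  diagR (fun j => lam j + c) = diagR lam + c%:C%:M.
Proof. by apply/matrixP => i j; rewrite !mxE rmorphD mulrnDl. Qed.

Lemma diagRZ n (lam : 'I_n -> R) (t : R) :
  diagR (fun j => t * lam j) = t%:C *: diagR lam.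
Proof. by apply/matrixP => i j; rewrite !mxE rmorphM mulrnAr. Qed.

Lemma mxtrace_diagR n (lam : 'I_n -> R) : \tr (diagR lam) = (\sum_j lam j)%:C.
Proof. by rewrite mxtrace_diag rmorph_sum; apply: eq_bigr => j _; rewrite mxE. Qed.

Lemma mxtrace_mul_diagR n (Y : 'M[C]_n) (lam : 'I_n -> R) :
  \tr (Y *m diagR lam) = \sum_k (lam k)%:C * Y k k.
Proof. by rewrite /mxtrace; apply: eq_bigr => k _; rewrite mul_mx_diag !mxE mulrC. Qed.

Lemma mxtrace_conj n (U M : 'M[C]_n) : U \in unitmx -> \tr (invmx U *m M *m U) = \tr M.
Proof. by move=> uU; rewrite mxtrace_mulC mulmxA mulmxV // mul1mx. Qed.

Lemma conj_addc n (U A : 'M[C]_n) (c : C) : U \in unitmx ->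
  invmx U *m (A + c%:M) *m U = invmx U *m A *m U + c%:M.
Proof.
by move=> uU; rewrite mulmxDr mulmxDl mul_mx_scalar -scalemxAl mulVmx // scalemx1.
Qed.

Lemma unitary_conj_diagR_herm n (P : 'M[C]_n) (lam : 'I_n -> R) :
  P \is unitarymx -> hermmx (invmx P *m diagR lam *m P).
Proof.
move=> uP; apply/hermmxP.
by rewrite invmx_unitaryE // !adjmxM adjmxK adjmx_diagR mulmxA.
Qed.

Lemma unitary_conj_diagRK n (P : 'M[C]_n) (lam : 'I_n -> R) :
  P \is unitarymx -> P *m (invmx P *m diagR lam *m P) *m adjmx P = diagR lam.
Proof. by move=> uP; rewrite !mulmxA mulmxV ?unitarymx_unit // mul1mx mulmxtVK. Qed.

Lemma diagR_intertwine_fun n (W : 'M[C]_n) (mu lam : 'I_n -> R) (g : R -> R) :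
  diagR mu *m W = W *m diagR lam ->
  diagR (fun j => g (mu j)) *m W = W *m diagR (fun j => g (lam j)).
Proof.
move=> /matrixP eW; apply/matrixP => i j; move: (eW i j).
rewrite !mul_diag_mx !mul_mx_diag !mxE.
have [->|nzW e] := eqVneq (W i j) 0; first by rewrite !mulr0 !mul0r.
have -> : mu i = lam j by apply: (@complexI R); apply: (mulIf nzW); rewrite e mulrC.
by rewrite mulrC.
Qed.

Lemma diagR_similar_fun n (U V : 'M[C]_n) (mu lam : 'I_n -> R) (g : R -> R) :
  U \in unitmx -> V \in unitmx ->
  invmx U *m diagR mu *m U = invmx V *m diagR lam *m V ->
  invmx U *m diagR (fun j => g (mu j)) *m U =
    invmx V *m diagR (fun j => g (lam j)) *m V.
Proof.
move=> uU uV /(congr1 (fun X => U *m X *m invmx V)) /=.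
rewrite !mulmxA (mulmxV uU) mul1mx (mulmxK uV) -[_ *m invmx V]mulmxA.
move=> /(diagR_intertwine_fun g) eW.
rewrite -[LHS](mulmxKV uV) -(mulmxA _ U) -(mulmxA (invmx U)) eW.
by rewrite !mulmxA (mulVmx uU) mul1mx.
Qed.

Lemma mxfun_spectral (g : R -> R) n (A : 'M[C]_n) :
  mxfun g A = invmx (spectralmx A) *m
    diagR (fun j => g (complex.Re (spectral_diag A 0 j))) *m spectralmx A.
Proof.
rewrite /mxfun /diagR.
have -> : map_mx (fun z => (g (complex.Re z))%:C) (spectral_diag A) =
    \row_j (g (complex.Re (spectral_diag A 0 j)))%:C.
  by apply/matrixP => i j; rewrite !mxE (ord1 i).
by [].
Qed.

Lemma herm_spectral n (A : 'M[C]_n) : hermmx A ->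
  A = invmx (spectralmx A) *m diagR (fun j => complex.Re (spectral_diag A 0 j)) *m
    spectralmx A.
Proof.
move=> hA; have /mxOverP real_diag := hermitian_spectral_diag_real hA.
have -> : diagR (fun j => complex.Re (spectral_diag A 0 j)) = diag_mx (spectral_diag A).
  by apply/matrixP => i j; rewrite !mxE RRe_real.
exact/orthomx_spectralP/hermitian_normalmx.
Qed.

Lemma mxfun_herm (g : R -> R) n (A : 'M[C]_n) : hermmx (mxfun g A).
Proof. by rewrite mxfun_spectral; apply/unitary_conj_diagR_herm/spectral_unitarymx. Qed.

Lemma mxtrace_mxfun (g : R -> R) n (A : 'M[C]_n) :
  \tr (mxfun g A) = (\sum_j g (complex.Re (spectral_diag A 0 j)))%:C.
Proof. by rewrite mxfun_spectral mxtrace_conj ?spectral_unit // mxtrace_diagR. Qed.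

Lemma mxfun_diagR (g : R -> R) n (A U : 'M[C]_n) (lam : 'I_n -> R) :
  hermmx A -> U \in unitmx -> A = invmx U *m diagR lam *m U ->
  mxfun g A = invmx U *m diagR (fun j => g (lam j)) *m U.
Proof.
move=> hA uU eA; rewrite mxfun_spectral.
by apply: diagR_similar_fun; rewrite ?spectral_unit // -herm_spectral.
Qed.

Lemma logmx_expmx n (X : 'M[C]_n) : hermmx X -> logmx (expmx X) = X.
Proof.
move=> hX; have eX := mxfun_spectral (@expR R) X.
rewrite /logmx (mxfun_diagR _ (mxfun_herm _ _) (spectral_unit X) eX).
by rewrite (eq_diagR (fun j => expRK _)) -herm_spectral.
Qed.

Lemma expmx_logmx n (A U : 'M[C]_n) (lam : 'I_n -> R) :
  hermmx A -> U \in unitmx -> A = invmx U *m diagR lam *m U -> (forall j, 0 < lam j) ->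
  expmx (logmx A) = A.
Proof.
move=> hA uU eA lam_gt0.
rewrite /expmx (mxfun_diagR _ (mxfun_herm _ _) uU (mxfun_diagR _ hA uU eA)).
by rewrite (eq_diagR (fun j => lnK (lam_gt0 j))) -eA.
Qed.

Lemma expmxDc n (A : 'M[C]_n) (c : R) :
  hermmx A -> expmx (A + c%:C%:M) = (expR c)%:C *: expmx A.
Proof.
move=> hA; have uP := spectral_unit A.
have eAc : A + c%:C%:M =
    invmx (spectralmx A) *m diagR (fun j => complex.Re (spectral_diag A 0 j) + c) *m
    spectralmx A.
  by rewrite diagR_addc conj_addc // -herm_spectral.
rewrite /expmx (mxfun_diagR _ (hermmxD hA (hermmx_scalar _ _)) uP eAc) mxfun_spectral.
rewrite (eq_diagR (fun j => expRD _ c)) (eq_diagR (fun j => mulrC _ (expR c))).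
by rewrite diagRZ -scalemxAr -scalemxAl.
Qed.

Lemma logmxZ n (A U : 'M[C]_n) (lam : 'I_n -> R) (t : R) :
  hermmx A -> U \in unitmx -> A = invmx U *m diagR lam *m U -> (forall j, 0 < lam j) ->
  0 < t -> logmx (t%:C *: A) = logmx A + (ln t)%:C%:M.
Proof.
move=> hA uU eA lam_gt0 t_gt0.
have ln_tlam j : ln (t * lam j) = ln (lam j) + ln t.
  by rewrite lnM ?posrE ?lam_gt0 // addrC.
have -> : logmx (t%:C *: A) = invmx U *m diagR (fun j => ln (t * lam j)) *m U.
  apply: mxfun_diagR (hermmxZ t hA) uU _.
  by rewrite diagRZ -scalemxAr -scalemxAl -eA.
rewrite /logmx (mxfun_diagR _ hA uU eA) {eA} -(conj_addc _ _ uU) -diagR_addc.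
by rewrite (eq_diagR ln_tlam).
Qed.

End MatrixFunction.

Section Gradient.
Variable R : realType.
Local Notation C := R[i].

Lemma hsdotZr n (G H : 'M[C]_n) a : hsdot G (a *: H) = a * hsdot G H.
Proof. by rewrite /hsdot -scalemxAr mxtraceZ. Qed.

Lemma hsdotZl n (G H : 'M[C]_n) a : hsdot (a *: G) H = conjC a * hsdot G H.
Proof. by rewrite /hsdot adjmxZ -scalemxAl mxtraceZ. Qed.

Lemma frob_ge0 n (H : 'M[C]_n) : 0 <= frob H.
Proof. exact: sqrtr_ge0. Qed.

Lemma frobZ n (H : 'M[C]_n) (s : R) : 0 <= s -> frob (s%:C *: H) = s * frob H.
Proof.
move=> s_ge0; rewrite /frob hsdotZr hsdotZl conjCc mulrA -rmorphM Re_realcM.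
by rewrite sqrtrM ?sqr_ge0 // sqrtr_sqr ger0_norm.
Qed.

Lemma gradient_directional n (f : 'M[C]_n -> R) rho G H :
  is_gradient f rho G -> hermmx H -> forall eps, 0 < eps ->
  exists2 s, 0 < s <= 1 &
    `|f (rho + s%:C *: H) - f rho - s * complex.Re (hsdot G H)| <= eps * s.
Proof.
move=> [_ hg] hH eps eps_gt0; set F := frob H.
have F_ge0 : 0 <= F := frob_ge0 H.
have F1_gt0 : 0 < F + 1 by rewrite ltr_wpDl.
have [del del_gt0 hdel] := hg (eps / (F + 1)) (divr_gt0 eps_gt0 F1_gt0).
pose s := Num.min 1 (del / (F + 1)).
have s_gt0 : 0 < s by rewrite lt_min ltr01 divr_gt0.
have s_le : s * (F + 1) <= del by rewrite -ler_pdivlMr // ge_min lexx orbT.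
exists s; first by rewrite s_gt0 ge_min lexx.
have small : frob (s%:C *: H) < del.
  by rewrite (frobZ _ (ltW s_gt0)); apply: lt_le_trans s_le; rewrite mulrDr mulr1 ltrDl.
move: (hdel _ (hermmxZ s hH) small); rewrite (frobZ _ (ltW s_gt0)) hsdotZr Re_realcM.
move/le_trans; apply.
have -> : eps / (F + 1) * (s * F) = eps * s * (F / (F + 1)) by ring.
apply: ler_piMr; first by rewrite mulr_ge0 ?ltW.
by rewrite ler_pdivrMr // mul1r lerDl.
Qed.

Lemma gradient_le n (f : 'M[C]_n -> R) rho G H (K : R) :
  is_gradient f rho G -> hermmx H ->
  (forall s, 0 < s -> s <= 1 -> f (rho + s%:C *: H) - f rho <= s * K) ->
  complex.Re (hsdot G H) <= K.
Proof.
move=> hg hH hK; rewrite leNgt; apply/negP => gK.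
have eps_gt0 : 0 < (complex.Re (hsdot G H) - K) / 2 by rewrite divr_gt0 ?subr_gt0.
have [s /andP[s_gt0 s_le1]] := gradient_directional hg hH eps_gt0.
rewrite ler_norml => /andP[lo _]; have := hK s s_gt0 s_le1; nra.
Qed.

Lemma gradient_ge n (f : 'M[C]_n -> R) rho G H (K : R) :
  is_gradient f rho G -> hermmx H ->
  (forall s, 0 < s -> s <= 1 -> s * K <= f (rho + s%:C *: H) - f rho) ->
  K <= complex.Re (hsdot G H).
Proof.
move=> hg hH hK; rewrite leNgt; apply/negP => gK.
have eps_gt0 : 0 < (K - complex.Re (hsdot G H)) / 2 by rewrite divr_gt0 ?subr_gt0.
have [s /andP[s_gt0 s_le1]] := gradient_directional hg hH eps_gt0.
rewrite ler_norml => /andP[_ hi]; have := hK s s_gt0 s_le1; nra.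
Qed.

End Gradient.

Section Density.
Variable R : realType.
Local Notation C := R[i].

Lemma add_scale_subE n (rho sigma : 'M[C]_n) (s : R) :
  rho + s%:C *: (sigma - rho) = s%:C *: sigma + (1 - s)%:C *: rho.
Proof. by rewrite rmorphB scalerBl scalerBr scale1r addrCA. Qed.

Lemma density_comb n (rho sigma : 'M[C]_n) (s : R) :
  density sigma -> density rho -> 0 <= s -> s <= 1 ->
  density (rho + s%:C *: (sigma - rho)).
Proof.
move=> [hs [ps ts]] [hr [pr tr]] s_ge0 s_le1; rewrite add_scale_subE.
split; last split.
- exact: hermmxD (hermmxZ _ hs) (hermmxZ _ hr).
- have entryDZ (a b : C) (X Y : 'M[C]_1) :
      (a *: X + b *: Y) 0 0 = a * X 0 0 + b * Y 0 0 by rewrite !mxE.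
  move=> v; rewrite mulmxDr mulmxDl -!scalemxAr -!scalemxAl entryDZ.
  by rewrite addr_ge0 // mulr_ge0 ?ler0c ?subr_ge0.
- by rewrite mxtraceD !mxtraceZ ts tr !mulr1 -rmorphD addrC subrK.
Qed.

Lemma hermmx_density_sub n (rho sigma : 'M[C]_n) :
  density sigma -> density rho -> hermmx (sigma - rho).
Proof. by move=> [hs _] [hr _]; apply: hermmxD hs (hermmxN hr). Qed.

Lemma minimizer_first_order n (f : 'M[C]_n -> R) rho G sigma :
  is_gradient f rho G -> minimizer f rho -> density sigma ->
  0 <= complex.Re (hsdot G (sigma - rho)).
Proof.
move=> hg [dr min_rho] ds; apply: (gradient_ge hg (hermmx_density_sub ds dr)).
move=> s s_gt0 s_le1; rewrite mulr0 subr_ge0.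
exact/min_rho/density_comb/s_le1/ltW.
Qed.

Lemma convex_first_order n (f : 'M[C]_n -> R) rho G sigma :
  convex_herm f -> is_gradient f rho G -> density rho -> density sigma ->
  complex.Re (hsdot G (sigma - rho)) <= f sigma - f rho.
Proof.
move=> cf hg dr ds; apply: (gradient_le hg (hermmx_density_sub ds dr)).
move=> s s_gt0 s_le1; rewrite add_scale_subE.
have := cf sigma rho s (proj1 ds) (proj1 dr) (ltW s_gt0) s_le1; lra.
Qed.

Lemma pure_density n (w : 'rV[C]_n) (a : R) :
  0 < a -> (w *m adjmx w) 0 0 = a%:C -> density (a^-1%:C *: (adjmx w *m w)).
Proof.
move=> a_gt0 ea; split; last split.
- by apply/hermmxZ/hermmxP; rewrite adjmxM adjmxK.
- move=> v; set y := v *m adjmx w.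
  have -> : v *m (a^-1%:C *: (adjmx w *m w)) *m adjmx v = a^-1%:C *: (y *m adjmx y).
    by rewrite adjmxM adjmxK -scalemxAr -scalemxAl !mulmxA.
  rewrite mxE [X in _ * X]mxE big_ord1 adjmxE.
  by rewrite mulr_ge0 ?ler0c ?invr_ge0 ?(ltW a_gt0) // mulcJ_ge0.
- by rewrite mxtraceZ mxtrace_mulC trace_mx11 ea -rmorphM mulVf ?gt_eqF.
Qed.

End Density.

Section QuadraticForm.
Variable R : realType.
Local Notation C := R[i].

Definition qform n (M : 'M[C]_n) (u : 'rV[C]_n) : C := (u *m M *m adjmx u) 0 0.

Lemma qform0 n (M : 'M[C]_n) : qform M 0 = 0.
Proof. by rewrite /qform !mul0mx mxE. Qed.

Lemma qform_delta n (M : 'M[C]_n) i : qform M (delta_mx 0 i) = M i i.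
Proof. by rewrite /qform adjmx_delta -rowE -colE !mxE. Qed.

Lemma qformMr n (M P : 'M[C]_n) u : qform M (u *m P) = qform (P *m M *m adjmx P) u.
Proof. by rewrite /qform adjmxM !mulmxA. Qed.

Lemma qformBc n (A : 'M[C]_n) (c : C) w :
  qform (A - c%:M) w = qform A w - c * (w *m adjmx w) 0 0.
Proof.
have entryBZ (X Y : 'M[C]_1) : (X - c *: Y) 0 0 = X 0 0 - c * Y 0 0 by rewrite !mxE.
by rewrite /qform mulmxBr mulmxBl mul_mx_scalar -scalemxAl entryBZ.
Qed.

Lemma qform_pair n (M : 'M[C]_n) i j (z : C) :
  qform M (delta_mx 0 i + z *: delta_mx 0 j) =
  M i i + conjC z * M i j + z * M j i + z * conjC z * M j j.
Proof.
rewrite /qform adjmxD adjmxZ !adjmx_delta !mulmxDl !mulmxDr -!scalemxAl -!scalemxAr.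
by rewrite -!rowE -!colE !mxE; ring.
Qed.

Lemma row_sqnorm_gt0 n (w : 'rV[C]_n) : w != 0 ->
  exists2 a : R, 0 < a & (w *m adjmx w) 0 0 = a%:C.
Proof.
move=> w_neq0; set x := (w *m adjmx w) 0 0.
have x_gt0 : 0 < x.
  have terms_ge0 j : 0 <= w 0 j * conjC (w 0 j) by exact: mulcJ_ge0.
  have -> : x = \sum_j w 0 j * conjC (w 0 j).
    by rewrite /x mxE; apply: eq_bigr => j _; rewrite adjmxE.
  rewrite lt_def sumr_ge0 ?andbT //; apply: contra w_neq0 => /eqP sum0.
  apply/eqP/rowP => j; have := psumr_eq0P (fun j _ => terms_ge0 j) sum0.
  by move=> /(_ j isT) /eqP; rewrite mulf_eq0 conjC_eq0 orbb mxE => /eqP.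
exists (complex.Re x); first by move: x_gt0; rewrite ltcE => /andP[].
by rewrite RRe_real ?gtr0_real.
Qed.

Lemma psd_unit_spectral n (rho : 'M[C]_n) :
  hermmx rho -> psdmx rho -> rho \in unitmx ->
  exists P (lam : 'I_n -> R),
    [/\ P \is unitarymx, forall j, 0 < lam j & rho = invmx P *m diagR lam *m P].
Proof.
move=> hr pr ur; set P := spectralmx rho.
pose lam j := complex.Re (spectral_diag rho 0 j).
have uP : P \is unitarymx := spectral_unitarymx rho.
have eR : rho = invmx P *m diagR lam *m P := herm_spectral hr.
exists P, lam; split=> // j; rewrite lt_def; apply/andP; split.
  apply: contraTneq ur => lam0; rewrite eR unitmxE !det_mulmx det_diag.
  by rewrite (bigD1 j) //= mxE lam0 rmorph0 mul0r mulr0 mul0r unitr0.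
have : 0 <= qform rho (delta_mx 0 j *m P) := pr _.
by rewrite qformMr eR unitary_conj_diagRK // qform_delta !mxE eqxx mulr1n ler0c.
Qed.

Lemma eq0_of_Re_conj_ge0 (x : C) :
  (forall z : C, z * conjC z = 1 -> 0 <= complex.Re (conjC z * x + z * conjC x)) ->
  x = 0.
Proof.
case: x => a b hx.
move: (hx 1) (hx (-1)) (hx 'i%C) (hx (- 'i%C)); simpc.
move=> /(_ erefl) /= h1 /(_ erefl) /= h2 /(_ erefl) /= h3 /(_ erefl) /= h4.
have -> : a = 0 by lra.
by have -> : b = 0 by lra.
Qed.

Lemma psd_diag_eq0 n (Y : 'M[C]_n) :
  hermmx Y -> (forall u, 0 <= complex.Re (qform Y u)) -> (forall k, Y k k = 0) -> Y = 0.
Proof.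
move=> /hermmxP hY psdY diag0; apply/matrixP => i j; rewrite mxE.
apply: eq0_of_Re_conj_ge0 => z hz.
have YE : Y j i = conjC (Y i j) by rewrite -{1}hY adjmxE.
have := psdY (delta_mx 0 i + z *: delta_mx 0 j).
by rewrite qform_pair YE !diag0 !mulr0 addr0 add0r.
Qed.

(* In the eigenbasis of [rho], [tr (Z rho)] is a positive combination of the
   diagonal entries of [Z], which are nonnegative. *)
Lemma psd_trace_eq0 n (Z rho P : 'M[C]_n) (lam : 'I_n -> R) :
  hermmx Z -> (forall u, 0 <= complex.Re (qform Z u)) ->
  P \is unitarymx -> (forall j, 0 < lam j) -> rho = invmx P *m diagR lam *m P ->
  complex.Re (\tr (Z *m rho)) = 0 -> Z = 0.
Proof.
move=> /hermmxP hZ psdZ uP lam_gt0 -> trZ0; set Y := P *m Z *m adjmx P.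
have hY : hermmx Y by apply/hermmxP; rewrite !adjmxM adjmxK hZ mulmxA.
have psdY u : 0 <= complex.Re (qform Y u) by rewrite -qformMr.
have trY : \sum_k lam k * complex.Re (Y k k) = 0.
  rewrite -[RHS]trZ0 invmx_unitaryE // !mulmxA mxtrace_mulC !mulmxA.
  by rewrite mxtrace_mul_diagR Re_sum; apply: eq_bigr => k _; rewrite Re_realcM.
have diagY k : Y k k = 0.
  have diag_ge0 i : 0 <= complex.Re (Y i i) by rewrite -qform_delta.
  have := psumr_eq0P (fun i _ => mulr_ge0 (ltW (lam_gt0 i)) (diag_ge0 i)) trY.
  move=> /(_ k isT) /eqP; rewrite mulf_eq0 (gt_eqF (lam_gt0 k)) /= => /eqP.
  have : conjC (Y k k) = Y k k by rewrite -adjmxE (proj1 (hermmxP Y) hY).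
  by case: (Y k k) => a b /= [] hb ->; congr (_ +i* _); lra.
have -> : Z = adjmx P *m Y *m P.
  have uPu := unitarymx_unit uP.
  by rewrite /Y !mulmxA -(invmx_unitaryE uP) (mulVmx uPu) mul1mx (mulmxKV uPu).
by rewrite (psd_diag_eq0 hY psdY diagY) mulmx0 mul0mx.
Qed.

End QuadraticForm.

Section FixedPoints.
Variable R : realType.
Local Notation C := R[i].

Lemma minimizer_gradient_psd n (f : 'M[C]_n -> R) rho G :
  is_gradient f rho G -> minimizer f rho ->
  forall w, 0 <= complex.Re (qform (G - (complex.Re (\tr (G *m rho)))%:C%:M) w).
Proof.
move=> hg hm w; set m := complex.Re (\tr (G *m rho)).
have [->|w_neq0] := eqVneq w 0; first by rewrite qform0.
have [a a_gt0 ea] := row_sqnorm_gt0 w_neq0.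
have := minimizer_first_order hg hm (pure_density a_gt0 ea).
have /hermmxP hG := proj1 hg.
rewrite qformBc ea -rmorphM ReB /= /hsdot hG mulmxBr raddfB /= -scalemxAr mxtraceZ.
rewrite mulmxA mxtrace_mulC mulmxA trace_mx11 ReB Re_realcM -/(qform G w) -/m => h.
have -> : complex.Re (qform G w) - m * a =
    a * (a^-1 * complex.Re (qform G w) - m) by field; rewrite gt_eqF.
exact: mulr_ge0 (ltW a_gt0) h.
Qed.

Lemma minimizer_gradient_scalar n (f : 'M[C]_n -> R) rho G :
  is_gradient f rho G -> minimizer f rho -> rho \in unitmx ->
  G = (complex.Re (\tr (G *m rho)))%:C%:M.
Proof.
move=> hg hm ur; have [[hr [pr tr]] _] := hm.
have [P [lam [uP lam_gt0 eR]]] := psd_unit_spectral hr pr ur.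
apply/eqP; rewrite -subr_eq0; apply/eqP.
apply: (psd_trace_eq0 _ (minimizer_gradient_psd hg hm) uP lam_gt0 eR).
  exact: hermmxD (proj1 hg) (hermmxN (hermmx_scalar _ _)).
by rewrite mulmxBl mul_scalar_mx raddfB /= mxtraceZ tr mulr1 ReB subrr.
Qed.

Lemma rho_step_scalar n (rho : 'M[C]_n) (c alpha : R) :
  density rho -> rho \in unitmx -> rho_step rho c%:C%:M alpha = rho.
Proof.
move=> [hr [pr tr]] ur.
have [P [lam [uP lam_gt0 eR]]] := psd_unit_spectral hr pr ur.
rewrite /rho_step /=.
have -> : logmx rho - alpha%:C *: c%:C%:M = logmx rho + (- (alpha * c))%:C%:M.
  by rewrite scale_scalar_mx -rmorphM rmorphN (raddfN (@scalar_mx _ n)).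
rewrite (expmxDc _ (mxfun_herm _ _)) (expmx_logmx hr (unitarymx_unit uP) eR lam_gt0).
by rewrite mxtraceZ tr mulr1 scalerK // realc_neq0 // gt_eqF // expR_gt0.
Qed.

Lemma expmx_normalized_eq n (rho X : 'M[C]_n) :
  density rho -> (\tr (expmx X))^-1 *: expmx X = rho ->
  exists2 t : R, 0 < t & expmx X = t%:C *: rho.
Proof.
move=> [_ [_ tr]] fixE; set E := expmx X in fixE *.
(* [tr E = 0] is excluded by the junk value [0^-1 = 0], which would make the
   left side [0], of trace [0 <> 1]. *)
have trE_neq0 : \tr E != 0.
  apply/eqP => trE0; move: tr; rewrite -fixE trE0 invr0 scale0r mxtrace0.
  by move/esym/eqP; rewrite oner_eq0.
set t := \sum_j expR (complex.Re (spectral_diag X 0 j)).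
have trEt : \tr E = t%:C := mxtrace_mxfun _ _.
have t_gt0 : 0 < t.
  rewrite lt_def sumr_ge0 => [|j _]; last exact: expR_ge0.
  by rewrite andbT; apply: contra trE_neq0; rewrite trEt => /eqP ->; rewrite rmorph0.
by exists t => //; rewrite -fixE trEt scalerKV // realc_neq0 // gt_eqF.
Qed.

Lemma rho_step_fixed_scalar n (rho G : 'M[C]_n) (alpha : R) :
  density rho -> rho \in unitmx -> hermmx G -> 0 < alpha -> rho_step rho G alpha = rho ->
  exists c : R, G = c%:C%:M.
Proof.
move=> dr ur hG alpha_gt0; have [hr [pr _]] := dr.
have [P [lam [uP lam_gt0 eR]]] := psd_unit_spectral hr pr ur.
set X := logmx rho - alpha%:C *: G.
have hX : hermmx X := hermmxD (mxfun_herm _ _) (hermmxN (hermmxZ _ hG)).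
rewrite /rho_step /= -/X => /(expmx_normalized_eq dr) [t t_gt0 eE].
have : X = logmx rho + (ln t)%:C%:M.
  by rewrite -(logmx_expmx hX) eE (logmxZ hr (unitarymx_unit uP) eR lam_gt0 t_gt0).
rewrite /X => /addrI /eqP; rewrite eqr_oppLR => /eqP eG.
have alpha_neq0 : alpha%:C != 0 :> C by rewrite realc_neq0 // gt_eqF.
exists (- ln t / alpha); apply: (scalerI alpha_neq0).
rewrite eG scale_scalar_mx -rmorphM mulrC divfK ?gt_eqF //.
by rewrite rmorphN (raddfN (@scalar_mx _ n)).
Qed.

End FixedPoints.

Theorem lemma6 (R : realType) (d : nat) (f : 'M[R[i]]_d -> R)
    (rho G : 'M[R[i]]_d) :
  convex_herm f -> density rho -> rho \in unitmx -> is_gradient f rho G ->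
  (minimizer f rho -> forall alpha : R, 0 <= alpha -> rho_step rho G alpha = rho) /\
  ((exists2 alpha : R, 0 < alpha & rho_step rho G alpha = rho) -> minimizer f rho).
Proof.
move=> cf dr ur hg; split.
  by move=> hm alpha _; rewrite (minimizer_gradient_scalar hg hm ur) rho_step_scalar.
move=> [alpha alpha_gt0 fix_rho].
have [c eG] := rho_step_fixed_scalar dr ur (proj1 hg) alpha_gt0 fix_rho.
split=> // sigma ds; rewrite -subr_ge0; apply: le_trans (convex_first_order cf hg dr ds).
have [[_ [_ tr_sigma]] [_ [_ tr_rho]]] := (ds, dr).
rewrite /hsdot eG adjmx_scalar conjCc mul_scalar_mx mxtraceZ raddfB /=.
by rewrite tr_sigma tr_rho subrr mulr0.
Qed.
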